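(* Let $a\in\mathbb C^*$ with $a\neq\pm1$. Then for every $L\ge1$ the map $s_{a,L}$ induces a Lie algebra isomorphism $\mathfrak{OA}_{a,L}\cong(\mathbb C[u]/u^L\mathbb C[u])\otimes\mathfrak{sl}_2$, and $s_a$ induces an isomorphism $\widehat{\mathfrak{OA}}_a\cong\mathfrak{sl}_2[[u]]$ which carries $\widehat{\mathfrak{OA}}_a^L$ onto $u^L\mathfrak{sl}_2[[u]]$ for every $L\ge0$.
   Context: Work over $\mathbb C$. $\mathfrak{sl}_2$ has basis $e,f,h$ with $[e,f]=h$, $[h,e]=2e$, $[h,f]=-2f$. $L(\mathfrak{sl}_2)=\mathbb C[t,t^{-1}]\otimes\mathfrak{sl}_2$ is the loop algebra with bracket $[p(t)x,q(t)y]=p(t)q(t)[x,y]$. The Onsager algebra is the Lie subalgebra $\mathfrak{OA}=\{p(t)e+p(t^{-1})f+q(t)h:\ p,q\in\mathbb C[t,t^{-1}],\ q(t^{-1})=-q(t)\}$ of $L(\mathfrak{sl}_2)$. For $a\in\mathbb C^*$, $U_a(t)=t^2-(a+a^{-1})t+1$ if $a^2\neq1$ and $U_a(t)=t-a$ if $a=\pm1$. For a reciprocal polynomial $P$ (nonconstant monic with $P(t)=\pm t^{\deg P}P(t^{-1})$), $\mathfrak I_{P(t)}=\{p(t)e+p(t^{-1})f+q(t)h\in\mathfrak{OA}:\ p(t),q(t)\in P(t)\mathbb C[t,t^{-1}]\}$. For $a\in\mathbb C^*$ and $L\ge1$ let $\mathfrak{OA}_{a,L}=\mathfrak{OA}/\mathfrak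 I_{U_a(t)^L}$, and $\mathfrak{OA}_{a,0}=0$; for $L\ge K$ there are canonical surjections $\mathfrak{OA}_{a,L}\to\mathfrak{OA}_{a,K}$. $\widehat{\mathfrak{OA}}_a=\varprojlim_L\mathfrak{OA}_{a,L}$ is the inverse limit Lie algebra, $\psi_{a,L}:\widehat{\mathfrak{OA}}_a\to\mathfrak{OA}_{a,L}$ the canonical map, and $\widehat{\mathfrak{OA}}_a^L=\ker\psi_{a,L}$. For $a\in\mathbb C^*$, $s_a:\mathfrak{OA}\to\mathfrak{sl}_2[[u]]=\mathbb C[[u]]\otimes\mathfrak{sl}_2$ is the Lie homomorphism given by Taylor expansion at $t=a$ in $u=t-a$: $p(t)x\mapsto\sum_{j\ge0}\frac{p^{(j)}(a)}{j!}u^jx$; $s_{a,L}$ is its composition with the projection to $\mathfrak{sl}_2[[u]]/u^L\mathfrak{sl}_2[[u]]\cong(\mathbb C[u]/u^L\mathbb C[u])\otimes\mathfrak{sl}_2$. *)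

From mathcomp Require Import all_boot all_algebra.
From mathcomp Require Import finmap.
From mathcomp Require Export reals complex.

Set Implicit Arguments.
Unset Strict Implicit.
Unset Printing Implicit Defensive.

Import GRing.Theory.
Local Open Scope ring_scope.

Section Defs.
Variable F : fieldType.

(* Laurent polynomials F[t,t^-1]: finitely supported coefficient maps
   Z -> F ; p represents  sum_k (p k) t^k.                              *)
Definition laurent := {fsfun int -> F with 0}.

Definition ladd (p q : laurent) : laurent :=
  [fsfun k in (finsupp p `|` finsupp q)%fset => (p k + q k)%R | 0].
Definition lopp (p : laurent) : laurent :=
  [fsfun k in finsupp p => (- p k)%R | 0].
Definition lscale (c : F) (p : laurent) : laurent :=
  [fsfun k in finsupp p => (c * p k)%R | 0].
Definition lmul (p q : laurent) : laurent :=
  [fsfun k in [fset (i + j)%R | i in finsupp p, j in finsupp q]%fset =>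
     (\sum_(i <- finsupp p) p i * q (k - i))%R | 0].
Definition linv (p : laurent) : laurent :=
  [fsfun k in [fset (- i)%R | i in finsupp p]%fset => p (- k)%R | 0].
Definition lpoly (P : {poly F}) : laurent :=
  [fsfun k in [fset (i%:Z) | i in iota 0 (size P)]%fset =>
     (match k with Posz n => P`_n | Negz _ => 0 end) | 0].

Definition ldvd (P : {poly F}) (p : laurent) : Prop :=
  exists r : laurent, p = lmul (lpoly P) r.

(* sl2 with basis e, f, h : x = (xe, xf, xh) stands for xe e + xf f + xh h. *)
Definition sl2 := (F * F * F)%type.
Definition sl2_e (x : sl2) : F := x.1.1.
Definition sl2_f (x : sl2) : F := x.1.2.
Definition sl2_h (x : sl2) : F := x.2.
Definition mk_sl2 (a b c : F) : sl2 := (a, b, c).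
(* vector space operations (the zmodType structure of a product is used for +) *)
Definition sl2_scale (c : F) (x : sl2) : sl2 :=
  mk_sl2 (c * sl2_e x) (c * sl2_f x) (c * sl2_h x).
(* the bracket with [e,f]=h, [h,e]=2e, [h,f]=-2f *)
Definition sl2_br (x y : sl2) : sl2 :=
  mk_sl2 (2 * (sl2_h x * sl2_e y - sl2_e x * sl2_h y))
         (2 * (sl2_f x * sl2_h y - sl2_h x * sl2_f y))
         (sl2_e x * sl2_f y - sl2_f x * sl2_e y).

(* The loop algebra L(sl2) = F[t,t^-1] (x) sl2 :
   p(t) e + p'(t) f + q(t) h.                                          *)
Record loop := Loop { lp_e : laurent; lp_f : laurent; lp_h : laurent }.

Definition loop_add (x y : loop) : loop :=
  Loop (ladd (lp_e x) (lp_e y)) (ladd (lp_f x) (lp_f y)) (ladd (lp_h x) (lp_h y)).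
Definition loop_opp (x : loop) : loop :=
  Loop (lopp (lp_e x)) (lopp (lp_f x)) (lopp (lp_h x)).
Definition loop_sub (x y : loop) : loop := loop_add x (loop_opp y).
Definition loop_scale (c : F) (x : loop) : loop :=
  Loop (lscale c (lp_e x)) (lscale c (lp_f x)) (lscale c (lp_h x)).
(* [p x, q y] = p q [x,y] *)
Definition loop_br (x y : loop) : loop :=
  Loop (lscale 2 (ladd (lmul (lp_h x) (lp_e y)) (lopp (lmul (lp_e x) (lp_h y)))))
       (lscale 2 (ladd (lmul (lp_f x) (lp_h y)) (lopp (lmul (lp_h x) (lp_f y)))))
       (ladd (lmul (lp_e x) (lp_f y)) (lopp (lmul (lp_f x) (lp_e y)))).

(* The Onsager algebra: p(t) e + p(t^-1) f + q(t) h with q(t^-1) = -q(t). *)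
Definition isOA (x : loop) : Prop :=
  lp_f x = linv (lp_e x) /\ linv (lp_h x) = lopp (lp_h x).

Definition inI (P : {poly F}) (x : loop) : Prop :=
  isOA x /\ ldvd P (lp_e x) /\ ldvd P (lp_h x).

Definition Ua (a : F) : {poly F} :=
  if a ^+ 2 != 1 then 'X^2 - (a + a^-1)%:P * 'X + 1 else 'X - a%:P.

(* sl2[[u]] = F[[u]] (x) sl2 : sum_j u^j g_j, represented by j |-> g_j. *)
Definition sl2ps := nat -> sl2.
Definition sl2ps_add (g k : sl2ps) : sl2ps := fun n => g n + k n.
Definition sl2ps_scale (c : F) (g : sl2ps) : sl2ps := fun n => sl2_scale c (g n).
Definition sl2ps_br (g k : sl2ps) : sl2ps :=
  fun n => \sum_(i < n.+1) sl2_br (g i) (k (n - i)%N).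
(* (F[u]/u^L F[u]) (x) sl2 : sum_(j<L) u^j g_j, represented by j |-> g_j. *)
Definition sl2trunc (L : nat) := 'I_L -> sl2.
Definition sl2trunc_add (L : nat) (g k : sl2trunc L) : sl2trunc L :=
  fun n => g n + k n.
Definition sl2trunc_scale (L : nat) (c : F) (g : sl2trunc L) : sl2trunc L :=
  fun n => sl2_scale c (g n).
(* u^i x * u^j y = u^(i+j) [x,y], truncated at u^L *)
Definition sl2trunc_br (L : nat) (g k : sl2trunc L) : sl2trunc L :=
  fun n => \sum_(i < (val n).+1)
     sl2_br (g (insubd n (val i))) (k (insubd n (val n - val i)%N)).

(* Taylor expansion at t = a:  the coefficient p^(j)(a)/j!  of u^j,
   using  d^j/dt^j t^k = k(k-1)...(k-j+1) t^(k-j)  for k in Z.         *)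
Definition ffactz (k : int) (j : nat) : F := \prod_(i < j) (k - i%:Z)%:~R.
Definition taylor_coef (a : F) (p : laurent) (j : nat) : F :=
  \sum_(k <- finsupp p) p k * ffactz k j / (j`!)%:R * a ^ (k - j%:Z).

Definition s_a (a : F) (x : loop) : sl2ps :=
  fun j => mk_sl2 (taylor_coef a (lp_e x) j) (taylor_coef a (lp_f x) j)
                  (taylor_coef a (lp_h x) j).
Definition s_aL (a : F) (L : nat) (x : loop) : sl2trunc L :=
  fun j => s_a a x (val j).

(* The inverse limit  OAhat_a = lim_L OA/I_{U_a^L}  (OA_{a,0} = 0),
   modelled by families of representatives x : nat -> OA, x L
   representing the component in OA_{a,L}; a family is an element of the
   inverse limit iff it is compatible with all canonical surjections
   OA_{a,L} -> OA_{a,K} (K <= L).                                        *)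
Definition OAhat (a : F) (x : nat -> loop) : Prop :=
  (forall L, isOA (x L)) /\
  (forall K L, (1 <= K)%N -> (K <= L)%N -> inI (Ua a ^+ K) (loop_sub (x L) (x K))).
(* equality in the inverse limit: componentwise equality in OA_{a,L} *)
Definition OAhat_eq (a : F) (x y : nat -> loop) : Prop :=
  forall L, (1 <= L)%N -> inI (Ua a ^+ L) (loop_sub (x L) (y L)).
Definition in_OAhat_ker (a : F) (L : nat) (x : nat -> loop) : Prop :=
  L = 0%N \/ inI (Ua a ^+ L) (x L).
Definition OAhat_add (x y : nat -> loop) : nat -> loop := fun L => loop_add (x L) (y L).
Definition OAhat_scale (c : F) (x : nat -> loop) : nat -> loop :=
  fun L => loop_scale c (x L).
Definition OAhat_br (x y : nat -> loop) : nat -> loop := fun L => loop_br (x L) (y L).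

(* the map OAhat_a -> sl2[[u]] induced by s_a : its u^n coefficient is
   the u^n coefficient of s_{a,n+1}(psi_{a,n+1} x).                       *)
Definition s_hat (a : F) (x : nat -> loop) : sl2ps := fun n => s_a a (x n.+1) n.

End Defs.
Arguments s_aL {F} a L x _.

From mathcomp Require Import all_boot all_algebra.
From mathcomp Require Import reals complex finmap.
From mathcomp Require Import ring zify.
From Stdlib Require Import FunctionalExtensionality IndefiniteDescription.
Set Implicit Arguments.
Unset Strict Implicit.
Unset Printing Implicit Defensive.
Import GRing.Theory Num.Theory.
Local Open Scope ring_scope.

(* Since a <> a^-1, U_a^L = (t - a)^L (t - a^-1)^L with coprime factors, so a
   Laurent polynomial lies in U_a^L F[t,t^-1] iff its first L Taylor coefficients
   vanish both at a and at a^-1.  For p e + p(t^-1) f + q h in OA the conditions at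
   a^-1 follow from those at a, because t |-> t^-1 exchanges the two points and
   q(t^-1) = -q(t); hence ker s_{a,L} = I_{U_a^L}.  Surjectivity is the Chinese
   remainder theorem: jets of p can be prescribed independently at a and at a^-1,
   which fixes the e- and f-components separately.  The Leibniz rule makes the
   Taylor map a Lie homomorphism, and the statements about the completion follow
   levelwise. *)

Section Laurent.
Variable F : fieldType.
Implicit Types (p q : laurent F) (P W : {poly F}).

Lemma finsupp_neq0 p k : p k != 0 -> k \in finsupp p.
Proof. by rewrite mem_finsupp. Qed.

Lemma eq_big_support (f : int -> F) (S T : {fset int}) :
  (forall k, f k != 0 -> k \in S) -> (forall k, f k != 0 -> k \in T) ->
  \sum_(k <- S) f k = \sum_(k <- T) f k.
Proof.
move=> fS fT.
rewrite (big_fset_incl _ (fsubsetUl S T)); last first.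
  by move=> k _ kS; apply/eqP; apply: contraNT kS; exact: fS.
rewrite -(big_fset_incl _ (fsubsetUr S T)) //.
by move=> k _ kT; apply/eqP; apply: contraNT kT; exact: fT.
Qed.

Lemma laddE p q k : ladd p q k = p k + q k.
Proof.
rewrite /ladd fsfunE; case: ifP => //; rewrite in_fsetU => /norP[].
by rewrite !mem_finsupp => /negPn/eqP-> /negPn/eqP->; rewrite addr0.
Qed.

Lemma loppE p k : lopp p k = - p k.
Proof.
rewrite /lopp fsfunE; case: ifP => //.
by rewrite mem_finsupp => /negPn/eqP->; rewrite oppr0.
Qed.

Lemma lscaleE c p k : lscale c p k = c * p k.
Proof.
rewrite /lscale fsfunE; case: ifP => //.
by rewrite mem_finsupp => /negPn/eqP->; rewrite mulr0.
Qed.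

Lemma linvE p k : linv p k = p (- k).
Proof.
rewrite /linv fsfunE; case: ifP => // kNS.
apply/esym/eqP; apply: contraFT kNS => pNk.
by apply/imfsetP; exists (- k); rewrite ?opprK // finsupp_neq0.
Qed.

Lemma lmulE p q k : lmul p q k = \sum_(i <- finsupp p) p i * q (k - i).
Proof.
rewrite /lmul fsfunE; case: ifP => // kNS.
symmetry; apply: big1_fset => i ip _.
apply/eqP; rewrite mulf_eq0; apply/orP; right.
apply: contraFT kNS => qki; apply/imfset2P; exists i => //.
by exists (k - i); rewrite ?finsupp_neq0 // addrC subrK.
Qed.

Definition coefz P (z : int) : F :=
  match z with Posz n => P`_n | Negz _ => 0 end.

Lemma lpolyE P k : lpoly P k = coefz P k.
Proof.
rewrite /lpoly fsfunE; case: ifP => // kNS.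
case: k kNS => // n kNS; apply/esym/eqP; apply: contraFT kNS => Pn.
apply/imfsetP; exists n => //=; rewrite mem_iota add0n /=.
by apply: contraNT Pn; rewrite -leqNgt => ?; rewrite /coefz nth_default.
Qed.

Lemma linvK : involutive (@linv F).
Proof. by move=> p; apply/fsfunP => k; rewrite !linvE opprK. Qed.

Lemma linvD p q : linv (ladd p q) = ladd (linv p) (linv q).
Proof. by apply/fsfunP => k; rewrite !(linvE, laddE). Qed.

Lemma linvN p : linv (lopp p) = lopp (linv p).
Proof. by apply/fsfunP => k; rewrite !(linvE, loppE). Qed.

Lemma big_linv p (g : int -> F) :
  \sum_(k <- finsupp (linv p)) linv p k * g k = \sum_(k <- finsupp p) p k * g (- k).
Proof.
rewrite (@eq_big_support _ _ [fset (- k)%R | k in finsupp p]%fset); first last.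
- move=> k; rewrite mulf_eq0 => /norP[pNk _]; apply/imfsetP; exists (- k); last by rewrite opprK.
  by rewrite finsupp_neq0 -?linvE.
- by move=> k; rewrite mulf_eq0 => /norP[/finsupp_neq0].
rewrite big_imfset /=; last by move=> ? ? _ _ /oppr_inj.
by apply: eq_bigr => k _; rewrite linvE opprK.
Qed.

Lemma linvM p q : linv (lmul p q) = lmul (linv p) (linv q).
Proof.
apply/fsfunP => k; rewrite linvE !lmulE big_linv.
by apply: eq_bigr => i _; rewrite linvE; congr (_ * q _); ring.
Qed.

End Laurent.

Section TaylorMonomial.
Variable F : fieldType.
Hypothesis char0F : has_pchar0 F.
Variable b : F.
Hypothesis b_neq0 : b != 0.

Lemma natf_neq0 n : (n%:R != 0 :> F) = (n != 0)%N.
Proof. by rewrite (pcharf0P F).1. Qed.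

Lemma ffactz0 k : ffactz F k 0 = 1.
Proof. by rewrite /ffactz big_ord0. Qed.

Lemma ffactzS k n : ffactz F k n.+1 = ffactz F k n * (k - n%:Z)%:~R.
Proof. by rewrite /ffactz big_ord_recr. Qed.

Lemma ffactzSS k n : ffactz F (k + 1) n.+1 = (k + 1)%:~R * ffactz F k n.
Proof.
rewrite /ffactz big_ord_recl /= subr0; congr (_ * _).
by apply: eq_bigr => i _; rewrite /bump /= add1n -addn1 PoszD opprD addrACA subrr addr0.
Qed.

Definition taylor_monomial (k : int) (n : nat) : F :=
  ffactz F k n / (n`!)%:R * b ^ (k - n%:Z).

Lemma taylor_monomial0 k : taylor_monomial k 0 = b ^ k.
Proof. by rewrite /taylor_monomial ffactz0 fact0 divr1 mul1r subr0. Qed.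

Lemma taylor_monomial_t0 n : taylor_monomial 0 n = (n == 0)%:R.
Proof.
case: n => [|n]; first by rewrite taylor_monomial0 expr0z.
by rewrite /taylor_monomial /ffactz big_ord_recl /= subr0 !mul0r.
Qed.

Lemma taylor_monomialS0 k : taylor_monomial (k + 1) 0 = b * taylor_monomial k 0.
Proof. by rewrite !taylor_monomial0 expfzDr // expr1z mulrC. Qed.

Lemma taylor_monomialSS k n :
  taylor_monomial (k + 1) n.+1 = taylor_monomial k n + b * taylor_monomial k n.+1.
Proof.
rewrite /taylor_monomial ffactzSS ffactzS factS natrM.
have -> : k + 1 - (n.+1)%:Z = k - n%:Z by rewrite -addn1 PoszD; ring.
have -> : b ^ (k - n%:Z) = b * b ^ (k - (n.+1)%:Z).
  by rewrite -{1}(subrK 1 (k - n%:Z)) expfzDr // expr1z mulrC -addn1 PoszD opprD addrA.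
have fact_neq0 : (n`!)%:R != 0 :> F by rewrite natf_neq0 -lt0n fact_gt0.
have Sn_neq0 : n%:R + 1 != 0 :> F by rewrite natr1 natf_neq0.
rewrite rmorphD rmorphB /= rmorph1 -natr1.
by field; rewrite fact_neq0 Sn_neq0.
Qed.

Lemma int_geometric_eq0 (g : int -> F) :
  g 0 = 0 -> (forall j, g (j + 1) = b * g j) -> forall j, g j = 0.
Proof.
move=> g0 gS; have gpos (n : nat) : g n = 0.
  by elim: n => [//|n IH]; rewrite -addn1 PoszD gS IH mulr0.
have gneg (n : nat) : g (- n%:Z) = 0.
  elim: n => [|n IH]; first by rewrite oppr0.
  have := gS (- (n.+1)%:Z); rewrite -addn1 PoszD opprD -addrA addNr addr0 IH.
  by move/esym/eqP; rewrite mulf_eq0 (negbTE b_neq0) => /eqP.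
by case=> n; rewrite ?NegzE.
Qed.

(* Vandermonde's identity for integer exponents: given the case n - 1, the
   difference of the two sides is geometric in j, so int_geometric_eq0 applies. *)
Lemma taylor_monomialD i j n :
  taylor_monomial (i + j) n = \sum_(l < n.+1) taylor_monomial i l * taylor_monomial j (n - l).
Proof.
pose S k m := \sum_(l < m.+1) taylor_monomial i l * taylor_monomial k (m - l).
have S_j0 m : taylor_monomial (i + 0) m = S 0 m.
  rewrite /S addr0 big_ord_recr /= subnn taylor_monomial_t0 mulr1 big1 ?add0r //.
  by move=> l _; rewrite taylor_monomial_t0 subn_eq0 leqNgt ltn_ord mulr0.
have SS k m : S (k + 1) m.+1 = S k m + b * S k m.+1.
  rewrite /S big_ord_recr /= subnn taylor_monomialS0.
  rewrite [X in _ = _ + b * X]big_ord_recr /= subnn mulrDr addrA mulrCA; congr (_ + _).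
  rewrite big_distrr /= -big_split /=; apply: eq_bigr => l _.
  rewrite subSn; last by rewrite -ltnS.
  by rewrite taylor_monomialSS mulrDr; congr (_ + _); exact: mulrCA.
elim: n j => [|n IH] j; apply/eqP; rewrite -subr_eq0; apply/eqP;
  apply: (int_geometric_eq0 (g := fun k => taylor_monomial (i + k) _ - S k _));
  rewrite ?S_j0 ?subrr // => {}j.
  rewrite /S !big_ord1 !subn0 addrA !taylor_monomialS0 mulrBr; congr (_ - _); exact: mulrCA.
by rewrite SS addrA taylor_monomialSS IH /S; ring.
Qed.

End TaylorMonomial.

Section TaylorCoef.
Variable F : fieldType.
Hypothesis char0F : has_pchar0 F.
Implicit Types (b : F) (p q : laurent F).

Lemma taylor_coef_big b p n (S : {fset int}) : (forall k, p k != 0 -> k \in S) ->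
  taylor_coef b p n = \sum_(k <- S) p k * taylor_monomial b k n.
Proof.
move=> pS; transitivity (\sum_(k <- finsupp p) p k * taylor_monomial b k n).
  by apply: eq_bigr => k _; rewrite /taylor_monomial !mulrA.
by apply: eq_big_support => k; rewrite mulf_eq0 => /norP[pk _];
  [exact: finsupp_neq0 | exact: pS].
Qed.

Lemma taylor_coefE b p n :
  taylor_coef b p n = \sum_(k <- finsupp p) p k * taylor_monomial b k n.
Proof. exact/taylor_coef_big/finsupp_neq0. Qed.

Lemma taylor_coefD b p q n :
  taylor_coef b (ladd p q) n = taylor_coef b p n + taylor_coef b q n.
Proof.
pose S := (finsupp p `|` finsupp q)%fset.
have pS k : p k != 0 -> k \in S by move/finsupp_neq0; rewrite in_fsetU => ->.
have qS k : q k != 0 -> k \in S by move/finsupp_neq0; rewrite in_fsetU orbC => ->.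
rewrite (taylor_coef_big _ _ pS) (taylor_coef_big _ _ qS) (@taylor_coef_big _ _ _ S).
  by rewrite -big_split /=; apply: eq_bigr => k _; rewrite laddE mulrDl.
move=> k; rewrite laddE; have [pk0|/pS //] := eqVneq (p k) 0.
by rewrite pk0 add0r => /qS.
Qed.

Lemma taylor_coefN b p n : taylor_coef b (lopp p) n = - taylor_coef b p n.
Proof.
rewrite (@taylor_coef_big _ _ _ (finsupp p)) ?taylor_coefE; last first.
  by move=> k; rewrite loppE oppr_eq0 => /finsupp_neq0.
by rewrite -sumrN; apply: eq_bigr => k _; rewrite loppE mulNr.
Qed.

Lemma taylor_coefB b p q n :
  taylor_coef b (ladd p (lopp q)) n = taylor_coef b p n - taylor_coef b q n.
Proof. by rewrite taylor_coefD taylor_coefN. Qed.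

Lemma taylor_coefZ b c p n : taylor_coef b (lscale c p) n = c * taylor_coef b p n.
Proof.
rewrite (@taylor_coef_big _ _ _ (finsupp p)) ?taylor_coefE; last first.
  by move=> k; rewrite lscaleE mulf_eq0 => /norP[_ /finsupp_neq0].
by rewrite mulr_sumr; apply: eq_bigr => k _; rewrite lscaleE mulrA.
Qed.

Lemma taylor_coefM b p q n : b != 0 ->
  taylor_coef b (lmul p q) n =
  \sum_(l < n.+1) taylor_coef b p l * taylor_coef b q (n - l).
Proof.
move=> b_neq0; pose tm := taylor_monomial b.
pose S := [fset (i + j)%R | i in finsupp p, j in finsupp q]%fset.
rewrite (@taylor_coef_big _ _ _ S); last first.
  by move=> k; rewrite /lmul fsfunE; case: ifP; rewrite ?eqxx.
transitivity (\sum_(i <- finsupp p) \sum_(j <- finsupp q) \sum_(l < n.+1)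
   p i * q j * (tm i l * tm j (n - l)%N)).
  under eq_bigr do rewrite lmulE mulr_suml.
  rewrite exchange_big /=; apply: eq_big_seq => i ip.
  rewrite (@eq_big_support _ _ S [fset (j + i)%R | j in finsupp q]%fset); first last.
  - move=> k; rewrite !mulf_eq0 => /norP[/norP[_ qki] _].
    by apply/imfsetP; exists (k - i); rewrite ?finsupp_neq0 ?subrK.
  - move=> k; rewrite !mulf_eq0 => /norP[/norP[_ qki] _].
    apply/imfset2P; exists i => //.
    by exists (k - i); rewrite ?finsupp_neq0 // addrC subrK.
  rewrite big_imfset /=; last by move=> ? ? _ _ /addIr.
  apply: eq_bigr => j _; rewrite addrK addrC taylor_monomialD // mulr_sumr.
  by apply: eq_bigr => l _; rewrite /tm; ring.
transitivity (\sum_(l < n.+1) \sum_(i <- finsupp p) \sum_(j <- finsupp q)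
   p i * q j * (tm i l * tm j (n - l)%N)).
  by under eq_bigr do rewrite exchange_big; rewrite exchange_big.
apply: eq_bigr => l _; rewrite !taylor_coefE mulr_suml.
apply: eq_bigr => i _; rewrite mulr_sumr; apply: eq_bigr => j _; rewrite /tm; ring.
Qed.

Definition vanishes_at b (L : nat) p := forall n, (n < L)%N -> taylor_coef b p n = 0.

Lemma vanishes_atN b L p : vanishes_at b L (lopp p) <-> vanishes_at b L p.
Proof.
split=> p0 n ltnL; have := p0 n ltnL; rewrite taylor_coefN.
  by move/eqP; rewrite oppr_eq0 => /eqP.
by move=> ->; rewrite oppr0.
Qed.

Lemma vanishes_atM b K M p q : b != 0 ->
  vanishes_at b K p -> vanishes_at b M q -> vanishes_at b (K + M) (lmul p q).
Proof.
move=> b_neq0 p0 q0 n ltnKM; rewrite taylor_coefM //; apply: big1 => l _.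
have [ltlK|leKl] := ltnP l K; first by rewrite p0 // mul0r.
by rewrite q0 ?mulr0 //; have := ltn_ord l; lia.
Qed.

Lemma vanishes_at_mull b L p q : b != 0 -> vanishes_at b L p -> vanishes_at b L (lmul p q).
Proof. by move=> b_neq0 p0; rewrite -[L]addn0; apply: vanishes_atM. Qed.

Lemma vanishes_at_mulr b L p q : b != 0 -> vanishes_at b L q -> vanishes_at b L (lmul p q).
Proof. by move=> b_neq0 q0; rewrite -[L]add0n; apply: vanishes_atM. Qed.

End TaylorCoef.

Section PolynomialRepresentation.
Variable F : fieldType.
Implicit Types (p q : laurent F) (P Q W : {poly F}).

(* t^-m W(t) *)
Definition lpoly_shift (m : nat) W : laurent F :=
  [fsfun k in [fset (i%:Z - m%:Z)%R | i in iota 0 (size W)]%fset =>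
     coefz W (k + m%:Z) | 0].

Lemma lpoly_shiftE m W k : lpoly_shift m W k = coefz W (k + m%:Z).
Proof.
rewrite /lpoly_shift fsfunE; case: ifP => // kNS.
case Ekm: (k + m%:Z) => [n|n] //=; apply/esym/eqP; apply: contraFT kNS => Wn.
apply/imfsetP; exists n => /=; last by rewrite -Ekm addrK.
rewrite mem_iota add0n /=; apply: contraNT Wn; rewrite -leqNgt => ?.
by rewrite nth_default.
Qed.

Lemma coefz_subn W (n j : nat) :
  coefz W (n%:Z - j%:Z) = if (j <= n)%N then W`_(n - j) else 0.
Proof.
case: leqP => [lejn|ltnj]; first by rewrite subzn.
have -> : n%:Z - j%:Z = Negz (j - n).-1.
  by rewrite NegzE prednK ?subn_gt0 // -subzn ?opprB // ltnW.
by [].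
Qed.

Lemma coefz_Negz_subn W (t j : nat) : coefz W (Negz t - j%:Z) = 0.
Proof. by have -> : Negz t - j%:Z = Negz (t + j) by rewrite !NegzE -addSn PoszD opprD. Qed.

Lemma big_lpoly Q (g : int -> F) :
  \sum_(i <- finsupp (lpoly Q)) lpoly Q i * g i = \sum_(j < size Q) Q`_j * g j.
Proof.
rewrite (@eq_big_support _ _ _ [fset (i%:Z) | i in iota 0 (size Q)]%fset); first last.
- move=> k; rewrite mulf_eq0 lpolyE => /norP[Qk _]; case: k Qk => [j Qj|t]; last by rewrite /= eqxx.
  apply/imfsetP; exists j => //=; rewrite mem_iota add0n /=.
  by apply: contraNT Qj; rewrite -leqNgt => ?; rewrite /coefz nth_default.
- by move=> k; rewrite mulf_eq0 => /norP[/finsupp_neq0].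
rewrite big_imfset /=; last by move=> ? ? _ _ [].
have -> : iota 0 (size Q) = index_iota 0 (size Q) by rewrite /index_iota subn0.
rewrite undup_id ?iota_uniq // big_mkord.
by apply: eq_bigr => j _; rewrite lpolyE.
Qed.

Lemma lmul_lpoly_shift Q m W : lmul (lpoly Q) (lpoly_shift m W) = lpoly_shift m (Q * W).
Proof.
apply/fsfunP => k; rewrite lmulE big_lpoly lpoly_shiftE.
under eq_bigr do rewrite lpoly_shiftE.
case Ekm: (k + m%:Z) => [n|t] /=; last first.
  have Ekj (j : nat) : k - j%:Z + m%:Z = Negz t - j%:Z by rewrite -Ekm; ring.
  by rewrite big1 // => j _; rewrite Ekj coefz_Negz_subn mulr0.
have Ekj (j : nat) : k - j%:Z + m%:Z = n%:Z - j%:Z by rewrite -Ekm; ring.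
under eq_bigr do rewrite Ekj coefz_subn.
pose g j := Q`_j * (if (j <= n)%N then W`_(n - j) else 0).
transitivity (\sum_(j < size Q + n.+1) g j).
  rewrite (big_ord_widen (size Q + n.+1) g (leq_addr _ _)) big_mkcond; apply: eq_bigr => j _.
  by case: ltnP => // ?; rewrite /g nth_default ?mul0r.
rewrite coefM; transitivity (\sum_(j < n.+1) g j); last first.
  by apply: eq_bigr => j _; rewrite /g -ltnS ltn_ord.
rewrite (big_ord_widen (size Q + n.+1) g (leq_addl _ _)) [RHS]big_mkcond.
by apply: eq_bigr => j _; rewrite /g ltnS; case: leqP => // _; rewrite mulr0.
Qed.

Lemma lpoly_shift0 W : lpoly W = lpoly_shift 0 W.
Proof. by apply/fsfunP => k; rewrite lpolyE lpoly_shiftE addr0. Qed.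

Lemma lpoly_shift_mulXn m W : lpoly_shift m ('X^m * W) = lpoly W.
Proof.
apply/fsfunP => k; rewrite lpoly_shiftE lpolyE; case: k => [j|t] /=.
  by rewrite coefXnM ltnNge leq_addl /= addnK.
rewrite NegzE addrC coefz_subn; case: ifP => // lemt.
by rewrite coefXnM ifT //; lia.
Qed.

Lemma laurent_lpoly_shift p : exists m W, p = lpoly_shift m W.
Proof.
pose m := \max_(k <- finsupp p) absz k.
have le_m k : p k != 0 -> (absz k <= m)%N.
  by move/finsupp_neq0 => kp; apply: (@leq_bigmax_seq _ _ xpredT (fun k : int => absz k)).
exists m, (\poly_(i < (2 * m).+1) p (i%:Z - m%:Z)).
apply/fsfunP => k; rewrite lpoly_shiftE.
case Ekm: (k + m%:Z) => [n|t] /=; rewrite ?coef_poly.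
  have -> : n%:Z - m%:Z = k by rewrite -Ekm addrK.
  case: ltnP => // len; apply/eqP; apply: contraLR len => /le_m ?.
  rewrite -ltnNge; lia.
by apply/eqP; apply: contraT => /le_m ?; lia.
Qed.

End PolynomialRepresentation.

Section Vanishing.
Variable F : fieldType.
Hypothesis char0F : has_pchar0 F.
Implicit Types (b c : F) (p q : laurent F) (P Q W : {poly F}).

Lemma coef_XaddC_exp b (i n : nat) : b != 0 ->
  (('X + b%:P) ^+ i)`_n = taylor_monomial b i n.
Proof.
move=> b_neq0; elim: i n => [|i IH] n; first by rewrite expr0 coef1 taylor_monomial_t0.
rewrite exprSr mulrDr coefD coefMX coefMC -addn1 PoszD.
case: n => [|n] /=; first by rewrite add0r taylor_monomialS0 // IH mulrC.
by rewrite taylor_monomialSS // !IH mulrC.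
Qed.

Lemma taylor_coef_lpoly b P n : b != 0 ->
  taylor_coef b (lpoly P) n = (P \Po ('X + b%:P))`_n.
Proof.
move=> b_neq0; rewrite taylor_coefE big_lpoly coef_comp_poly.
by apply: eq_bigr => j _; rewrite coef_XaddC_exp.
Qed.

Lemma comp_XsubC_XaddC b : ('X - b%:P) \Po ('X + b%:P) = 'X.
Proof. by rewrite comp_polyB comp_polyX comp_polyC addrK. Qed.

Lemma comp_XsubC_exp_XaddC b L : (('X - b%:P) ^+ L) \Po ('X + b%:P) = 'X^L.
Proof. by rewrite -comp_Xn_poly -comp_polyA comp_XsubC_XaddC comp_polyXr. Qed.

(* Taylor expansion at b is the coefficient sequence of P(X + b). *)
Lemma vanishes_at_lpolyP b L P : b != 0 ->
  vanishes_at b L (lpoly P) <-> ('X - b%:P) ^+ L %| P.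
Proof.
move=> b_neq0; split=> [P0|/dvdpP[W ->] n ltnL]; last first.
  by rewrite taylor_coef_lpoly // comp_polyM comp_XsubC_exp_XaddC coefMXn ltnL.
set Q := P \Po ('X + b%:P).
have take_Q0 : take_poly L Q = 0.
  apply/polyP => i; rewrite coef_take_poly coef0; case: ifP => // ltiL.
  by rewrite -taylor_coef_lpoly ?P0.
apply/dvdpP; exists (drop_poly L Q \Po ('X - b%:P)).
rewrite -[P](comp_polyXaddC_K _ b) -/Q -{1}(poly_take_drop L Q) take_Q0 add0r.
by rewrite comp_polyM comp_Xn_poly.
Qed.

Lemma vanishes_at_lpoly_shift b L m W : b != 0 ->
  vanishes_at b L (lpoly_shift m W) <-> vanishes_at b L (lpoly W).
Proof.
move=> b_neq0; split=> W0.
  by rewrite -(lpoly_shift_mulXn m) -lmul_lpoly_shift; apply: vanishes_at_mulr.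
rewrite -(mulr1 W) -lmul_lpoly_shift; exact: vanishes_at_mull.
Qed.

Lemma taylor_coef_linv0 b p : taylor_coef b (linv p) 0 = taylor_coef b^-1 p 0.
Proof.
rewrite !taylor_coefE big_linv; apply: eq_bigr => k _.
by rewrite !taylor_monomial0 exprz_inv.
Qed.

Lemma vanishes_at_linv_XsubC_exp b L : b != 0 ->
  vanishes_at b L (linv (lpoly (('X - b^-1%:P) ^+ L))).
Proof.
move=> b_neq0; elim: L => [|L IH]; first by [].
rewrite exprS lpoly_shift0 -lmul_lpoly_shift linvM -lpoly_shift0 -add1n.
apply: vanishes_atM => // n; rewrite ltnS leqn0 => /eqP ->.
rewrite taylor_coef_linv0 taylor_coef_lpoly ?invr_eq0 //.
by rewrite comp_XsubC_XaddC coefX.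
Qed.

Lemma vanishes_at_linv b L p : b != 0 ->
  vanishes_at b L (linv p) <-> vanishes_at b^-1 L p.
Proof.
have vanishes_linv c q : c != 0 -> vanishes_at c^-1 L q -> vanishes_at c L (linv q).
  move=> c_neq0; have [m [W ->]] := laurent_lpoly_shift q.
  rewrite vanishes_at_lpoly_shift ?invr_eq0 // vanishes_at_lpolyP ?invr_eq0 //.
  move=> /dvdpP[Z ->]; rewrite mulrC -lmul_lpoly_shift linvM.
  exact/vanishes_at_mull/vanishes_at_linv_XsubC_exp.
move=> b_neq0; split; last exact: vanishes_linv.
by move=> p0; rewrite -(linvK p); apply: vanishes_linv; rewrite ?invr_eq0 ?invrK.
Qed.

(* Chinese remainder theorem for (X - b)^L and (X - c)^L. *)
Lemma lpoly_interpolation b c L (y : nat -> F) : b != 0 -> c != 0 -> b != c ->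
  exists P, (forall n, (n < L)%N -> taylor_coef b (lpoly P) n = y n) /\
            vanishes_at c L (lpoly P).
Proof.
move=> b_neq0 c_neq0 neq_bc.
have /Bezout_eq1_coprimepP [[u v] /= Huv] : coprimep (('X - b%:P) ^+ L) (('X - c%:P) ^+ L).
  by apply/coprimep_expl/coprimep_expr/coprimep_XsubC2; rewrite subr_eq0 eq_sym.
set T := \poly_(n < L) y n \Po ('X - b%:P).
exists (v * ('X - c%:P) ^+ L * T); split.
  move=> n ltnL; rewrite taylor_coef_lpoly //.
  have -> : v * ('X - c%:P) ^+ L = 1 - u * ('X - b%:P) ^+ L by rewrite -Huv addrAC subrr add0r.
  rewrite comp_polyM comp_polyB comp_polyM comp_XsubC_exp_XaddC comp_polyC.
  rewrite -comp_polyA comp_XsubC_XaddC comp_polyXr mulrBl mul1r coefB mulrAC coefMXn ltnL.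
  by rewrite subr0 coef_poly ltnL.
by apply/vanishes_at_lpolyP => //; rewrite dvdp_mulr // dvdp_mull.
Qed.

End Vanishing.

Section TaylorMap.
Variable F : fieldType.
Hypothesis char0F : has_pchar0 F.
Variable a : F.
Implicit Types x y : loop F.

Lemma big_sl2 (I : Type) (r : seq I) (P : pred I) (g : I -> sl2 F) :
  \sum_(i <- r | P i) g i = mk_sl2 (\sum_(i <- r | P i) sl2_e (g i))
     (\sum_(i <- r | P i) sl2_f (g i)) (\sum_(i <- r | P i) sl2_h (g i)).
Proof.
elim: r => [|i r IH]; first by rewrite !big_nil.
by rewrite !big_cons; case: (P i); rewrite IH.
Qed.

Lemma s_a_add x y n : s_a a (loop_add x y) n = s_a a x n + s_a a y n.
Proof. by rewrite /s_a /= !taylor_coefD. Qed.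

Lemma s_a_sub x y n : s_a a (loop_sub x y) n = s_a a x n - s_a a y n.
Proof. by rewrite /s_a /= !taylor_coefB. Qed.

Lemma s_a_scale c x n : s_a a (loop_scale c x) n = sl2_scale c (s_a a x n).
Proof. by rewrite /s_a /= !taylor_coefZ. Qed.

Lemma s_a_br x y n : a != 0 ->
  s_a a (loop_br x y) n = \sum_(i < n.+1) sl2_br (s_a a x i) (s_a a y (n - i)%N).
Proof.
move=> a_neq0; rewrite big_sl2 /s_a /=.
rewrite !(taylor_coefZ, taylor_coefB, taylor_coefM char0F _ _ _ a_neq0).
by rewrite /sl2_br /sl2_e /sl2_f /sl2_h /mk_sl2 /= -!mulr_sumr !sumrB.
Qed.

Lemma s_a_vanishes L x : (forall n, (n < L)%N -> s_a a x n = 0) <->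
  [/\ vanishes_at a L (lp_e x), vanishes_at a L (lp_f x) & vanishes_at a L (lp_h x)].
Proof.
split=> [x0 | [e0 f0 h0] n ltnL]; last by rewrite /s_a e0 ?f0 ?h0.
by split=> n /x0; rewrite /s_a => -[].
Qed.

Lemma isOA_sub x y : isOA x -> isOA y -> isOA (loop_sub x y).
Proof.
move=> [fx hx] [fy hy]; split => /=; first by rewrite fx fy linvD linvN.
by rewrite linvD linvN hx hy; apply/fsfunP => k; rewrite !(laddE, loppE) opprD.
Qed.

End TaylorMap.

Section OnsagerQuotient.
Variable F : fieldType.
Hypothesis char0F : has_pchar0 F.
Variable a : F.
Hypothesis a_neq0 : a != 0.
Hypothesis a2_neq1 : a ^+ 2 != 1.
Implicit Types (p : laurent F) (x y : loop F).

Let ai_neq0 : a^-1 != 0. Proof. by rewrite invr_eq0. Qed.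

Let a_neq_ai : a != a^-1.
Proof. by apply: contra a2_neq1 => /eqP a_ai; rewrite expr2 {1}a_ai mulVf. Qed.

Lemma Ua_factor : Ua a = ('X - a%:P) * ('X - a^-1%:P).
Proof.
rewrite /Ua a2_neq1 polyCD.
have aai : a%:P * a^-1%:P = 1 :> {poly F} by rewrite -polyCM mulfV.
by rewrite -[in LHS]aai; ring.
Qed.

Lemma ldvd_UaX L p : ldvd (Ua a ^+ L) p <-> vanishes_at a L p /\ vanishes_at a^-1 L p.
Proof.
have coprime_roots : coprimep (('X - a%:P) ^+ L) (('X - a^-1%:P) ^+ L).
  by apply/coprimep_expl/coprimep_expr/coprimep_XsubC2; rewrite subr_eq0 eq_sym.
rewrite Ua_factor exprMn; split=> [[r ->] | []].
  split; apply: vanishes_at_mull; rewrite // vanishes_at_lpolyP //.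
    exact/dvdp_mulr/dvdpp.
  exact/dvdp_mull/dvdpp.
have [m [W ->]] := laurent_lpoly_shift p.
rewrite !vanishes_at_lpoly_shift // !vanishes_at_lpolyP // => dvdW1 dvdW2.
have /dvdpP[Z ->] : ('X - a%:P) ^+ L * ('X - a^-1%:P) ^+ L %| W.
  by rewrite Gauss_dvdp // dvdW1 dvdW2.
by exists (lpoly_shift m Z); rewrite lmul_lpoly_shift mulrC.
Qed.

Lemma inI_UaXP L x : isOA x ->
  inI (Ua a ^+ L) x <-> (forall n, (n < L)%N -> s_a a x n = 0).
Proof.
move=> ox; have [fx hx] := ox; rewrite s_a_vanishes /inI fx !ldvd_UaX.
split=> [[_ [[e0 ei0] [h0 _]]] | [e0 /vanishes_at_linv ei0 h0]].
  by split=> //; apply/vanishes_at_linv.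
do !split=> //; first exact: ei0.
by apply/vanishes_at_linv; rewrite // hx vanishes_atN.
Qed.

Lemma inI_sub_UaXP L x y : isOA x -> isOA y ->
  inI (Ua a ^+ L) (loop_sub x y) <-> (forall n, (n < L)%N -> s_a a x n = s_a a y n).
Proof.
move=> ox oy; rewrite inI_UaXP; last exact: isOA_sub.
split=> xy n ltnL; last by rewrite s_a_sub xy ?subrr.
by apply/eqP; rewrite -subr_eq0 -s_a_sub xy.
Qed.

Lemma s_aL_eq0 L x : s_aL a L x = (fun=> 0) <-> (forall n, (n < L)%N -> s_a a x n = 0).
Proof.
split=> [x0 n ltnL | x0]; first exact: (congr1 (fun g => g (Ordinal ltnL)) x0).
by apply: functional_extensionality => j; exact: x0 (ltn_ord j).
Qed.

(* e = P1 + P2(t^-1), where P1 and P2 carry the e- and f-jets at a and vanish to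
   order L at a^-1, so that P2(t^-1) and P1(t^-1) vanish to order L at a. *)
Lemma s_aL_surj L (y : sl2trunc F L) : exists x, isOA x /\ s_aL a L x = y.
Proof.
pose ext (c : sl2 F -> F) n := if insub n is Some i then c (y i) else 0.
have [P1 [P1a P1ai]] := lpoly_interpolation char0F L (ext (@sl2_e F)) a_neq0 ai_neq0 a_neq_ai.
have [P2 [P2a P2ai]] := lpoly_interpolation char0F L (ext (@sl2_f F)) a_neq0 ai_neq0 a_neq_ai.
have [P3 [P3a P3ai]] := lpoly_interpolation char0F L (ext (@sl2_h F)) a_neq0 ai_neq0 a_neq_ai.
have linv_a p : vanishes_at a^-1 L p -> vanishes_at a L (linv p).
  exact: (vanishes_at_linv char0F L p a_neq0).2.
pose e := ladd (lpoly P1) (linv (lpoly P2)).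
pose h := ladd (lpoly P3) (lopp (linv (lpoly P3))).
exists (Loop e (linv e) h); split.
  split => //=; apply/fsfunP => k; rewrite /h !(linvE, laddE, loppE) opprK; ring.
apply: functional_extensionality => j; rewrite /s_aL /s_a /= /e /h.
rewrite linvD linvK !taylor_coefD !taylor_coefN P1a ?P2a ?P3a ?ltn_ord //.
rewrite ?(linv_a _ P1ai) ?(linv_a _ P2ai) ?(linv_a _ P3ai) ?ltn_ord //.
by rewrite /ext valK addr0 add0r subr0; case: (y j) => [[]].
Qed.

End OnsagerQuotient.

Section TruncatedTaylorMap.
Variable F : fieldType.
Hypothesis char0F : has_pchar0 F.
Variables (a : F) (L : nat).
Implicit Types x y : loop F.

Lemma s_aL_add x y : s_aL a L (loop_add x y) = sl2trunc_add (s_aL a L x) (s_aL a L y).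
Proof. by apply: functional_extensionality => j; rewrite /s_aL s_a_add. Qed.

Lemma s_aL_scale c x : s_aL a L (loop_scale c x) = sl2trunc_scale c (s_aL a L x).
Proof. by apply: functional_extensionality => j; rewrite /s_aL s_a_scale. Qed.

Lemma s_aL_br x y : a != 0 ->
  s_aL a L (loop_br x y) = sl2trunc_br (s_aL a L x) (s_aL a L y).
Proof.
move=> a_neq0; apply: functional_extensionality => j.
rewrite /s_aL /sl2trunc_br s_a_br //; apply: eq_bigr => i _.
have lejL k : (k <= j)%N -> (k < L)%N by move/leq_ltn_trans; apply.
have leij : (i <= j)%N by rewrite -ltnS.
by rewrite !val_insubd (ifT _ _ (lejL _ leij)) (ifT _ _ (lejL _ (leq_subr _ _))).
Qed.

End TruncatedTaylorMap.

Section OnsagerCompletion.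
Variable F : fieldType.
Hypothesis char0F : has_pchar0 F.
Variable a : F.
Hypothesis a_neq0 : a != 0.
Hypothesis a2_neq1 : a ^+ 2 != 1.
Implicit Types x y : nat -> loop F.

Lemma s_hat_compat x : OAhat a x ->
  forall L n, (n < L)%N -> s_hat a x n = s_a a (x L) n.
Proof.
move=> [ox xK] L n ltnL.
by rewrite ((inI_sub_UaXP char0F a_neq0 a2_neq1 _ (ox L) (ox n.+1)).1 (xK n.+1 _ isT ltnL)).
Qed.

Lemma s_hat_inj x y : OAhat a x -> OAhat a y ->
  s_hat a x = s_hat a y <-> OAhat_eq a x y.
Proof.
move=> hx hy; split=> [xy L _ | xy].
  apply/(inI_sub_UaXP char0F a_neq0 a2_neq1 _ (hx.1 L) (hy.1 L)) => n ltnL.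
  by rewrite -(s_hat_compat hx ltnL) -(s_hat_compat hy ltnL) xy.
apply: functional_extensionality => n.
exact: (inI_sub_UaXP char0F a_neq0 a2_neq1 _ (hx.1 _) (hy.1 _)).1 (xy n.+1 isT) n (ltnSn n).
Qed.

Lemma s_hat_surj (g : sl2ps F) : exists x, OAhat a x /\ s_hat a x = g.
Proof.
have lift L : exists z, isOA z /\ s_aL a L.+1 z = (fun j => g (val j)).
  exact: s_aL_surj.
pose x L := proj1_sig (constructive_indefinite_description _ (lift L)).
have [ox sx] : (forall L, isOA (x L)) /\ forall L n, (n <= L)%N -> s_a a (x L) n = g n.
  split=> L; rewrite /x; case: constructive_indefinite_description => z [oz sz] //=.
  by move=> n leLn; exact: (congr1 (fun f => f (Ordinal (leLn : (n < L.+1)%N))) sz).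
exists x; split; last by apply: functional_extensionality => n; rewrite /s_hat sx.
split=> // K L _ leKL; apply/(inI_sub_UaXP char0F a_neq0 a2_neq1 _ (ox L) (ox K)) => n ltnK.
by rewrite !sx //; lia.
Qed.

Lemma s_hat_add x y : s_hat a (OAhat_add x y) = sl2ps_add (s_hat a x) (s_hat a y).
Proof. by apply: functional_extensionality => n; rewrite /s_hat s_a_add. Qed.

Lemma s_hat_scale c x : s_hat a (OAhat_scale c x) = sl2ps_scale c (s_hat a x).
Proof. by apply: functional_extensionality => n; rewrite /s_hat s_a_scale. Qed.

Lemma s_hat_br x y : OAhat a x -> OAhat a y ->
  s_hat a (OAhat_br x y) = sl2ps_br (s_hat a x) (s_hat a y).
Proof.
move=> hx hy; apply: functional_extensionality => n.
rewrite /s_hat /OAhat_br s_a_br //; apply: eq_bigr => i _.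
by rewrite -(s_hat_compat hx (ltn_ord i)) -(s_hat_compat hy (n := (n - i)%N)) // ltnS leq_subr.
Qed.

Lemma s_hat_ker L x : OAhat a x ->
  in_OAhat_ker a L x <-> (forall n, (n < L)%N -> s_hat a x n = 0).
Proof.
case: L => [|L] hx; first by split=> // _; left.
rewrite /in_OAhat_ker (inI_UaXP char0F a_neq0 a2_neq1 _ (hx.1 _)).
split=> [[//|x0] n ltnL | x0]; first by rewrite (s_hat_compat hx ltnL) x0.
by right=> n ltnL; rewrite -(s_hat_compat hx ltnL) x0.
Qed.

End OnsagerCompletion.

Local Open Scope complex_scope.

Theorem theorem3 (R : realType) (a : R[i]) :
  a != 0 -> a != 1 -> a != -1 ->
  (forall L : nat, (1 <= L)%N ->
     [/\ (forall x y, isOA x -> isOA y ->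
            s_aL a L (loop_add x y) = sl2trunc_add (s_aL a L x) (s_aL a L y)),
         (forall (c : R[i]) x, isOA x ->
            s_aL a L (loop_scale c x) = sl2trunc_scale c (s_aL a L x)),
         (forall x y, isOA x -> isOA y ->
            s_aL a L (loop_br x y) = sl2trunc_br (s_aL a L x) (s_aL a L y)),
         (forall x, isOA x -> (s_aL a L x = (fun=> 0) <-> inI (Ua a ^+ L) x)) &
         (forall y : sl2trunc _ L, exists x, isOA x /\ s_aL a L x = y)]) /\
  [/\ (forall x, OAhat a x -> forall L n, (n < L)%N -> s_hat a x n = s_a a (x L) n),
      (forall x y, OAhat a x -> OAhat a y ->
         (s_hat a x = s_hat a y <-> OAhat_eq a x y)),
      (forall g : sl2ps _, exists x, OAhat a x /\ s_hat a x = g),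
      [/\ (forall x y, OAhat a x -> OAhat a y ->
             s_hat a (OAhat_add x y) = sl2ps_add (s_hat a x) (s_hat a y)),
          (forall (c : R[i]) x, OAhat a x ->
             s_hat a (OAhat_scale c x) = sl2ps_scale c (s_hat a x)) &
          (forall x y, OAhat a x -> OAhat a y ->
             s_hat a (OAhat_br x y) = sl2ps_br (s_hat a x) (s_hat a y))] &
      (forall L x, OAhat a x ->
         (in_OAhat_ker a L x <-> (forall n, (n < L)%N -> s_hat a x n = 0)))].
Proof.
move=> a_neq0 a_neq1 a_neqN1.
have char0C : has_pchar0 R[i] := pchar_num _.
have a2_neq1 : a ^+ 2 != 1 by rewrite sqrf_eq1 negb_or a_neq1 a_neqN1.
split=> [L _ | ].
  split=> [x y _ _ | c x _ | x y _ _ | x ox | y].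
  - exact: s_aL_add.
  - exact: s_aL_scale.
  - exact: s_aL_br.
  - by rewrite s_aL_eq0 inI_UaXP.
  - exact: s_aL_surj.
split.
- exact: s_hat_compat.
- exact: s_hat_inj.
- exact: s_hat_surj.
- by split=> [x y _ _ | c x _ |]; [exact: s_hat_add | exact: s_hat_scale | exact: s_hat_br].
- exact: s_hat_ker.
Qed.
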